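(* For every integer $m\ge0$, the space of $L_1$-invariants in $S^m(Q^\times/Q)$ is $\mathbb{C}q_1^m$; that is, $H^0(L_1;S^*(Q^\times/Q))=\mathbb{C}[q_1]$ is the polynomial algebra in $q_1$.
   Context: $Q^\times$ is the Fréchet space of holomorphic quadratic differentials $f(z)dz^2$ on $\mathbb{C}\setminus\{0\}$ and $Q\subset Q^\times$ the closed subspace of those with $f$ entire; the Lie algebra of holomorphic vector fields on $\mathbb{C}$ vanishing at $0$ acts on both by $(\xi\frac{d}{dz})\cdot(fdz^2)=(\xi f'+2\xi'f)dz^2$, hence on the quotient $Q^\times/Q$. $L_1$ is the closed subalgebra generated by $e_k=z^{k+1}\frac{d}{dz}$, $k\ge1$ (holomorphic vector fields on $\mathbb{C}$ vanishing to order at least $2$ at $0$). For $\nu\in\mathbb{Z}$, $q_\nu$ denotes the class of $z^{\nu-2}dz^2$ in $Q^\times/Q$, so $q_1$ is the class of $z^{-1}dz^2$. $S^m(Q^\times/Q)$ is the completed $m$-fold symmetric tensor power over $\mathbb{C}$ with the diagonal action, $S^*=\bigoplus_{m\ge0}S^m$ with the symmetric product, and $H^0(L_1;\cdot)$ denotes $L_1$-invariants. *)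

From mathcomp Require Import all_boot all_order all_algebra.
From mathcomp Require Import fingroup perm reals complex.
Set Implicit Arguments. Unset Strict Implicit. Unset Printing Implicit Defensive.
Import Order.TTheory GRing.Theory Num.Theory.
Local Open Scope ring_scope.
Local Open Scope complex_scope.

(* Concrete coefficient model of S^m(Q^x/Q) over C := R[i], R : realType.
   A tensor q_{nu_1} (x) ... (x) q_{nu_m} is indexed by nu : 'I_m -> int;
   q_nu is the class of z^(nu-2) dz^2, which is 0 in Q^x/Q when nu >= 2.
   An element of the completed m-fold symmetric power is a (formal, convergent)
   sum  sum_nu c(nu) q_{nu_1}...q_{nu_m}  with c symmetric, supported on
   {nu | forall j, nu_j <= 1}, and such that the associated power series in
   w = 1/z is entire in m variables (absolute summability for every radius). *)

Definition idx (m : nat) := {ffun 'I_m -> int}.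
Definition coef (R : realType) (m : nat) := idx m -> R[i].

(* nu_j <= 1 for all j : the monomial is a nonzero class in (Q^x/Q)^{(x)m} *)
Definition in_support (m : nat) (nu : idx m) : bool := [forall j, nu j <= 1].

Definition shift (m : nat) (nu : idx m) (i : 'I_m) (k : int) : idx m :=
  [ffun j => if j == i then nu j - k else nu j].

(* degree in w = 1/z of the monomial: q_nu <-> w^(2-nu) *)
Definition wdeg (m : nat) (nu : idx m) : nat := \sum_(j < m) `|2 - nu j|%N.

Definition Sm_elem (R : realType) (m : nat) (c : coef R m) : Prop :=
  [/\ (forall nu, ~~ in_support nu -> c nu = 0),
      (forall (s : 'S_m) (nu : idx m), c [ffun j => nu (s j)] = c nu) &
      (forall r : R, 0 < r -> exists M : R, forall s : seq (idx m), uniq s ->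
          \sum_(nu <- s) `|c nu| * ((r ^+ wdeg nu)%:C) <= M%:C)].

(* Action of e_k = z^(k+1) d/dz (diagonal, Leibniz rule):
   e_k . q_nu = (nu + 2k) q_(nu+k), so the coefficient of e_k . x at mu
   (mu in the support) is  sum_i (mu_i + k) c(mu - k e_i). *)
Definition act_e (R : realType) (m : nat) (k : nat) (c : coef R m) : coef R m :=
  fun mu => if in_support mu then
              \sum_(i < m) ((mu i + k%:Z)%:~R) * c (shift mu i k%:Z)
            else 0.

(* L_1-invariance: annihilated by the topological generators e_k, k >= 1. *)
Definition L1_invariant (R : realType) (m : nat) (c : coef R m) : Prop :=
  forall k : nat, (0 < k)%N -> forall mu : idx m, act_e k c mu = 0.

Definition q1pow (R : realType) (m : nat) : coef R m :=
  fun nu => if [forall j, nu j == 1] then 1 else 0.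

From mathcomp Require Import all_boot all_order all_algebra.
From mathcomp Require Import fingroup perm reals complex zify.
From Stdlib Require Import FunctionalExtensionality.
Set Implicit Arguments. Unset Strict Implicit. Unset Printing Implicit Defensive.
Import GRing.Theory Num.Theory.
Local Open Scope ring_scope.
Local Open Scope complex_scope.

(* Induction on the number of indices nu_i <> 1 of a coefficient c(nu).  If
   nu_i <= 0, let k = 1 - nu_i and let mu be nu with nu_i replaced by 1.  The
   coefficient of e_k . x at mu collects (1 + k) c(nu) from the index i and,
   by symmetry of c, from every index l with nu_l = 1; every other index l
   contributes a coefficient whose multi-index has one fewer entry <> 1, which
   vanishes by induction.  Invariance thus forces a positive multiple of c(nu)
   to vanish, so only the coefficient of q_1^m survives. *)

Definition defect (m : nat) (nu : idx m) : nat := #|[pred j | nu j != 1]|.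

Definition set_coord (m : nat) (nu : idx m) (i : 'I_m) (x : int) : idx m :=
  [ffun j => if j == i then x else nu j].

Lemma defect_eq0 (m : nat) (nu : idx m) :
  (defect nu == 0)%N = [forall j, nu j == 1].
Proof.
apply/eqP/forallP => [/card0_eq nu1 j | nu1].
  by have := nu1 j; rewrite !inE => /negbFE.
by apply: eq_card0 => j; rewrite !inE nu1.
Qed.

Lemma in_support_set_coord (m : nat) (nu : idx m) (i : 'I_m) :
  in_support nu -> in_support (set_coord nu i 1).
Proof.
move/forallP=> nu_le1; apply/forallP => j; rewrite ffunE.
by case: ifP => // _; apply: nu_le1.
Qed.

Lemma in_support_shift (m : nat) (nu : idx m) (l : 'I_m) (k : int) :
  0 <= k -> in_support nu -> in_support (shift nu l k).
Proof.
move=> k_ge0 /forallP nu_le1; apply/forallP => j; rewrite ffunE.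
by case: ifP => _; have := nu_le1 j; lia.
Qed.

Lemma shift_set_coord_id (m : nat) (nu : idx m) (i : 'I_m) :
  shift (set_coord nu i 1) i (1 - nu i) = nu.
Proof.
apply/ffunP => j; rewrite !ffunE.
by case: eqP => [->|//]; rewrite opprB addrC subrK.
Qed.

Lemma shift_set_coord_tperm (m : nat) (nu : idx m) (i l : 'I_m) :
  l != i -> nu l = 1 ->
  shift (set_coord nu i 1) l (1 - nu i) = [ffun j => nu (tperm i l j)].
Proof.
move=> li nul; apply/ffunP => j; rewrite !ffunE.
case: (tpermP i l j) => [->|->|ji jl]; rewrite ?eqxx.
- by rewrite eq_sym (negbTE li) nul.
- by rewrite (negbTE li) nul opprB addrC subrK.
- by move: ji jl => /eqP/negbTE -> /eqP/negbTE ->.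
Qed.

Lemma defect_shift_set_coord (m : nat) (nu : idx m) (i l : 'I_m) (k : int) :
  l != i -> nu i != 1 -> nu l < 1 -> 0 <= k ->
  (defect (shift (set_coord nu i 1) l k)).+1 = defect nu.
Proof.
move=> li nui nul k_ge0; rewrite /defect [RHS](cardD1 i) inE nui add1n.
congr _.+1; apply: eq_card => j; rewrite !inE !ffunE.
case: (eqVneq j l) => [->|jl]; first by rewrite (negbTE li); lia.
by case: (eqVneq j i).
Qed.

Lemma q1pow_shift (R : realType) (m : nat) (mu : idx m) (l : 'I_m) (k : nat) :
  (0 < k)%N -> in_support mu -> @q1pow R m (shift mu l k%:Z) = 0.
Proof.
move=> k_gt0 /forallP mu_le1; rewrite /q1pow; case: forallP => // /(_ l).
by rewrite ffunE eqxx; have := mu_le1 l; lia.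
Qed.

Lemma scaled_q1pow_L1_invariant (R : realType) (m : nat) (a : R[i]) :
  L1_invariant (fun nu => a * @q1pow R m nu).
Proof.
move=> k k_gt0 mu; rewrite /act_e; case: ifP => // mu_supp.
by apply: big1 => l _; rewrite q1pow_shift // !mulr0.
Qed.

Section InvariantCoefficients.

Variables (R : realType) (m : nat) (c : coef R m).
Hypothesis c_sym : forall (s : 'S_m) (nu : idx m), c [ffun j => nu (s j)] = c nu.
Hypothesis c_inv : L1_invariant c.

Lemma L1_invariant_coef_eq0 (nu : idx m) :
  in_support nu -> (0 < defect nu)%N -> c nu = 0.
Proof.
have [n] := ubnP (defect nu); elim: n nu => // n IH nu.
rewrite ltnS => dnu /forallP nu_le1 d_gt0.
case/card_gt0P: d_gt0 => i; rewrite inE => nui.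
pose k := `|1 - nu i|%N.
have k_def : k%:Z = 1 - nu i by have := nu_le1 i; lia.
have k_gt0 : (0 < k)%N by lia.
pose mu := set_coord nu i 1.
have mu_supp : in_support mu by apply/in_support_set_coord/forallP.
have summand l : ((mu l + k%:Z)%:~R * c (shift mu l k%:Z) : R[i]) =
    if (l == i) || (nu l == 1) then (1 + k%:Z)%:~R * c nu else 0.
  rewrite k_def /mu !ffunE; case: (eqVneq l i) => [->|li] /=.
    by rewrite shift_set_coord_id.
  case: (eqVneq (nu l) 1) => [nul|nul].
    by rewrite shift_set_coord_tperm // c_sym nul.
  have nul_lt1 : nu l < 1 by have := nu_le1 l; lia.
  have k_ge0 : 0 <= 1 - nu i by rewrite -k_def.
  have dsh := defect_shift_set_coord li nui nul_lt1 k_ge0.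
  rewrite IH ?mulr0 //.
  - by rewrite -ltnS dsh.
  - exact: in_support_shift k_ge0 mu_supp.
  - by apply/card_gt0P; exists l; rewrite inE !ffunE eqxx (negbTE li); lia.
have i_counted : (0 < #|[pred l | (l == i) || (nu l == 1)]|)%N.
  by apply/card_gt0P; exists i; rewrite inE eqxx.
have := c_inv k_gt0 mu; rewrite /act_e mu_supp.
rewrite (eq_bigr _ (fun l _ => summand l)) -big_mkcond sumr_const => /eqP.
rewrite mulrn_eq0 eqn0Ngt i_counted mulf_eq0 intr_eq0 /=.
by move/eqP.
Qed.

End InvariantCoefficients.

Theorem lemma4p8 (R : realType) (m : nat) (c : coef R m) :
  Sm_elem c ->
  (L1_invariant c <-> exists a : R[i], c = (fun nu => a * @q1pow R m nu)).
Proof.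
case=> c_supp c_sym _; split => [c_inv | [a ->]]; last first.
  exact: scaled_q1pow_L1_invariant.
exists (c [ffun _ => 1]); apply: functional_extensionality => nu.
rewrite /q1pow; case: forallP => [all1 | not_all1].
  by rewrite mulr1; congr c; apply/ffunP => j; rewrite ffunE; apply/eqP.
rewrite mulr0; have [nu_supp|] := boolP (in_support nu); last exact: c_supp.
by apply: L1_invariant_coef_eq0; rewrite // lt0n defect_eq0; apply/forallP.
Qed.
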